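(* Let $f,g\in F$ with $g\neq f$ be mutually singular with respect to each other, and let $\vec f=(f,g)$. If $T$ is a reasonable test, then $f(A^{\vec f}_{T,f})=g(A^{\vec f}_{T,g})=1$.
   Context: Let $\Omega=\{0,1\}$, $\Omega^\infty$ the set of infinite sequences $\omega=(\omega_1,\omega_2,\dots)$, and $\omega^t=(\omega_1,\dots,\omega_t)$ (also used for the cylinder set of all sequences with this prefix; $\omega^0=\emptyset$). $\mathcal G_t$ is the $\sigma$-algebra generated by the length-$t$ cylinders and $\mathcal G_\infty$ the $\sigma$-algebra generated by all cylinders. $\Delta(\Omega)$ is the set of probability distributions on $\Omega$; for $p\in\Delta(\Omega)$ and $x\in\Omega$, $p[x]$ is the probability of $x$. A forecasting strategy is a map $f:\bigcup_{t\ge0}(\Omega\times\Delta(\Omega)\times\Delta(\Omega))^t\to\Delta(\Omega)$; $F$ is the set of all forecasting strategies. Given an ordered pair $\vec f=(f,g)\in F\times F$ and $\omega\in\Omega^\infty$, the play path $(\omega,\vec f)\in(\Omega\times\Delta(\Omega)\times\Delta(\Omega))^\infty$ is defined recursively: $(\omega,\vec f)^0=\emptyset$ and its $t$-th entry is $(\omega_t,f((\omega,\vec f)^{t-1}),g((\omega,\vec f)^{t-1}))$. The pair $\vec f$ induces two probability measures on $(\Omega^\infty,\mathcal G_\infty)$, again denoted $f$ and $g$, determined by $f(\omega^t)=\prod_{n=1}^t f((\omega,\vec f)^{n-1})[\omega_n]$ and $g(\omega^t)=\prod_{n=1}^t g((\omega,\vec f)^{n-1})[\omega_n]$. A (cardinal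 comparison) test is a sequence $T=(T_t)_{t>0}$ of $\mathcal G_t$-measurable functions $T_t:(\Omega\times\Delta(\Omega)\times\Delta(\Omega))^\infty\to[0,1]$; write $T_t(\omega,\vec f)=T_t((\omega,\vec f))$ and $T(\omega,\vec f)=\lim_t T_t(\omega,\vec f)$ whenever the limit exists. For $\epsilon\in(0,1)$ let $L^{\vec f}_{T,\epsilon}=\{\omega:T(\omega,\vec f)\text{ exists and }>\epsilon\}$ and $R^{\vec f}_{T,\epsilon}=\{\omega:T(\omega,\vec f)\text{ exists and }<\epsilon\}$. $T$ is reasonable if for all $\vec f=(f,g)$ and measurable $A$: for $\epsilon\in(0,\frac12)$, if $g(A)>0$ and $f(A)<\frac{\epsilon}{1-\epsilon}g(A)$ then $g(A\cap R^{\vec f}_{T,\epsilon})>0$; and for $\epsilon\in(\frac12,1)$, if $f(A)>0$ and $g(A)<\frac{1-\epsilon}{\epsilon}f(A)$ then $f(A\cap L^{\vec f}_{T,\epsilon})>0$. Let $A^{\vec f}_{T,f}=\{\omega: T_t(\omega,\vec f)\to1\}$ and $A^{\vec f}_{T,g}=\{\omega: T_t(\omega,\vec f)\to0\}$. Two forecasting strategies $f\ne g$ are mutually singular with respect to each other if there exist disjoint sets $C_f,C_g\subseteq(\Omega\times\Delta(\Omega)\times\Delta(\Omega))^\infty$ with $f(\{\omega:(\omega,\vec f)\in C_f\})=g(\{\omega:(\omega,\vec f)\in C_g\})=1$, where $\vec f=(f,g)$ and $f,g$ on the left denote the induced measures. *)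

From Stdlib Require Import Reals List.
Open Scope R_scope.

(* Omega = {0,1} is bool (true = 1). A distribution on Omega is given by
   its probability of 1. *)
Record Dist := mkDist { pr1 : R; pr1_ge0 : 0 <= pr1; pr1_le1 : pr1 <= 1 }.

Definition prob (p : Dist) (x : bool) : R := if x then pr1 p else 1 - pr1 p.

Definition Entry := (bool * Dist * Dist)%type.
(* finite histories, in chronological order *)
Definition Hist := list Entry.
Definition Strategy := Hist -> Dist.
(* infinite sequences; omega_{n+1} is (w n) *)
Definition Seq := nat -> bool.

Fixpoint hist (w : Seq) (f g : Strategy) (t : nat) : Hist :=
  match t with
  | O => nil
  | S n => hist w f g n ++ ((w n, f (hist w f g n), g (hist w f g n)) :: nil)
  end.

Definition path (w : Seq) (f g : Strategy) : nat -> Entry :=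
  fun n => (w n, f (hist w f g n), g (hist w f g n)).

Definition cylinder (w : Seq) (t : nat) : Seq -> Prop :=
  fun v => forall i, (i < t)%nat -> v i = w i.

Inductive measurable : (Seq -> Prop) -> Prop :=
| meas_cyl w t : measurable (cylinder w t)
| meas_compl A : measurable A -> measurable (fun v => ~ A v)
| meas_union (A : nat -> Seq -> Prop) :
    (forall n, measurable (A n)) -> measurable (fun v => exists n, A n v)
| meas_ext A B : measurable A -> (forall v, A v <-> B v) -> measurable B.

Definition is_prob_measure (mu : (Seq -> Prop) -> R) : Prop :=
  (forall A, measurable A -> 0 <= mu A) /\
  mu (fun _ => True) = 1 /\
  (forall A : nat -> Seq -> Prop,
     (forall n, measurable (A n)) ->
     (forall m n, m <> n -> forall v, A m v -> A n v -> False) ->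
     infinite_sum (fun n => mu (A n)) (mu (fun v => exists n, A n v))).

Fixpoint cyl_prob (sel : Strategy) (w : Seq) (f g : Strategy) (t : nat) : R :=
  match t with
  | O => 1
  | S n => cyl_prob sel w f g n * prob (sel (hist w f g n)) (w n)
  end.

Definition induces (sel f g : Strategy) (mu : (Seq -> Prop) -> R) : Prop :=
  is_prob_measure mu /\
  forall w t, mu (cylinder w t) = cyl_prob sel w f g t.

(* A test: T t h is T_t evaluated on a path whose length-t prefix is h
   (G_t-measurability = dependence on the first t entries only). *)
Definition Test := nat -> Hist -> R.

Definition is_test (T : Test) : Prop := forall t h, 0 <= T t h <= 1.

Definition Tseq (T : Test) (w : Seq) (f g : Strategy) : nat -> R :=
  fun t => T t (hist w f g t).

Definition Lset (T : Test) (f g : Strategy) (eps : R) : Seq -> Prop :=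
  fun w => exists l, Un_cv (Tseq T w f g) l /\ l > eps.

Definition Rset (T : Test) (f g : Strategy) (eps : R) : Seq -> Prop :=
  fun w => exists l, Un_cv (Tseq T w f g) l /\ l < eps.

Definition reasonable (T : Test) : Prop :=
  forall (f g : Strategy) (muf mug : (Seq -> Prop) -> R),
    induces f f g muf -> induces g f g mug ->
    forall A, measurable A ->
      (forall eps, 0 < eps < 1/2 ->
         mug A > 0 -> muf A < eps / (1 - eps) * mug A ->
         mug (fun w => A w /\ Rset T f g eps w) > 0) /\
      (forall eps, 1/2 < eps < 1 ->
         muf A > 0 -> mug A < (1 - eps) / eps * muf A ->
         muf (fun w => A w /\ Lset T f g eps w) > 0).

Definition A_f (T : Test) (f g : Strategy) : Seq -> Prop :=
  fun w => Un_cv (Tseq T w f g) 1.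
Definition A_g (T : Test) (f g : Strategy) : Seq -> Prop :=
  fun w => Un_cv (Tseq T w f g) 0.

Definition mutually_singular (f g : Strategy) (muf mug : (Seq -> Prop) -> R) : Prop :=
  f <> g /\
  exists Cf Cg : (nat -> Entry) -> Prop,
    (forall x, Cf x -> Cg x -> False) /\
    measurable (fun w => Cf (path w f g)) /\
    measurable (fun w => Cg (path w f g)) /\
    muf (fun w => Cf (path w f g)) = 1 /\
    mug (fun w => Cg (path w f g)) = 1.

From Pilot Require Import Defs.
From Stdlib Require Import Reals.
From Stdlib Require Import Lra Lia Classical FunctionalExtensionality PropExtensionality.
Open Scope R_scope.

(* Write S_e for the event "T_t(w) >= e for all large t" (e > 1/2).  Since the
   path of w up to time t depends only on w^t, S_e is measurable, and the event
   L_e that the test converges to a limit above e is contained in S_e.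
   Let A = C_f \ S_e, where C_f, C_g are the disjoint carriers of f and g.
   Then g(A) = 0 since A misses C_g; if f(A) > 0, reasonableness of T gives
   f(A ∩ L_e) > 0, which is absurd since A ∩ L_e is empty.  Hence f(A) = 0 and
   f(S_e) >= f(C_f ∩ S_e) = 1.  Because T_t takes values in [0,1], T_t -> 1
   iff w lies in S_{1-1/(k+3)} for every k, a countable intersection of
   f-full events, so f(A_f) = 1.  Symmetrically g(A_g) = 1.
   The file first develops the measurability of the relevant events, then the
   elementary facts about probability measures that are used (finite
   additivity, monotonicity, countable intersections of full events), the
   abstract "detection" argument above, and the convergence criteria for
   sequences in [0,1]; the theorem is assembled from these at the end. *)

Lemma mu_ext (mu : (Seq -> Prop) -> R) (A B : Seq -> Prop) :
  (forall v, A v <-> B v) -> mu A = mu B.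
Proof.
  intro H; f_equal; extensionality v; apply propositional_extensionality, H.
Qed.

Lemma meas_full : measurable (fun _ => True).
Proof.
  apply meas_ext with (cylinder (fun _ => true) 0); [constructor |].
  intros v; split; [auto | intros _ i Hi; lia].
Qed.

Lemma meas_empty : measurable (fun _ => False).
Proof. apply meas_ext with (fun _ => ~ True); [apply meas_compl, meas_full | tauto]. Qed.

Lemma meas_or (A B : Seq -> Prop) :
  measurable A -> measurable B -> measurable (fun v => A v \/ B v).
Proof.
  intros HA HB.
  apply meas_ext with (fun v => exists n, (match n with O => A | _ => B end) v).
  - apply meas_union; intros [|n]; auto.
  - intros v; split.
    + intros [[|n] H]; auto.
    + intros [H|H]; [exists O | exists 1%nat]; auto.
Qed.

Lemma meas_all (A : nat -> Seq -> Prop) :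
  (forall n, measurable (A n)) -> measurable (fun v => forall n, A n v).
Proof.
  intros H. apply meas_ext with (fun v => ~ exists n, ~ A n v).
  - apply meas_compl, meas_union; intros n; apply meas_compl, H.
  - intros v; split.
    + intros Hv n; apply NNPP; intros Hn; apply Hv; eauto.
    + intros Hv [n Hn]; auto.
Qed.

Lemma meas_and (A B : Seq -> Prop) :
  measurable A -> measurable B -> measurable (fun v => A v /\ B v).
Proof.
  intros HA HB.
  apply meas_ext with (fun v => forall n, (match n with O => A | _ => B end) v).
  - apply meas_all; intros [|n]; auto.
  - intros v; split.
    + intros H; split; [apply (H O) | apply (H 1%nat)].
    + intros [H1 H2] [|n]; auto.
Qed.

(* By induction on k, "P v and v agrees with w on [k, n)" is a finite
   union of cylinders intersected with P, which is either a cylinder or empty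
   for k = 0. *)
Lemma meas_finite_dependence (n : nat) (P : Seq -> Prop) :
  (forall v w, (forall i, (i < n)%nat -> v i = w i) -> (P v <-> P w)) ->
  measurable P.
Proof.
  intros HP.
  assert (Hk : forall k w,
    measurable (fun v => P v /\ forall i, (k <= i < n)%nat -> v i = w i)).
  { induction k as [|k IH]; intros w.
    - destruct (classic (P w)) as [Hw|Hw].
      + apply meas_ext with (cylinder w n); [constructor |].
        intros v; split.
        * intros Hc; split; [apply (HP v w); auto | intros i Hi; apply Hc; lia].
        * intros [_ Hc] i Hi; apply Hc; lia.
      + apply meas_ext with (fun _ => False); [apply meas_empty |].
        intros v; split; [tauto |].
        intros [Hv Hc]; apply Hw, (HP v w); auto; intros i Hi; apply Hc; lia.
    - set (u b := fun i => if Nat.eq_dec i k then b else w i).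
      apply meas_ext with (fun v =>
        (P v /\ forall i, (k <= i < n)%nat -> v i = u true i) \/
        (P v /\ forall i, (k <= i < n)%nat -> v i = u false i)).
      + apply meas_or; apply IH.
      + intros v; split.
        * intros [[H1 H2]|[H1 H2]]; split; auto; intros i Hi;
            rewrite (H2 i ltac:(lia)); unfold u;
            destruct (Nat.eq_dec i k); first [lia | reflexivity].
        * intros [H1 H2].
          destruct (v k) eqn:E; [left | right]; split; auto; intros i Hi; unfold u;
            destruct (Nat.eq_dec i k) as [->|]; auto; apply H2; lia. }
  apply meas_ext with (fun v => P v /\ forall i, (n <= i < n)%nat -> v i = true).
  - apply (Hk n (fun _ => true)).
  - intros v; split; [tauto | intros H; split; [auto | intros; lia]].
Qed.

Lemma hist_ext (f g : Strategy) (n : nat) (v w : Seq) :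
  (forall i, (i < n)%nat -> v i = w i) -> hist v f g n = hist w f g n.
Proof.
  induction n as [|n IH]; intros H; simpl; auto.
  rewrite IH by (intros; apply H; lia). rewrite (H n) by lia. reflexivity.
Qed.

Definition eventually (P : nat -> Prop) : Prop :=
  exists N, forall n, (N <= n)%nat -> P n.

Lemma meas_eventually_test (T : Test) (f g : Strategy) (Q : nat -> R -> Prop) :
  measurable (fun v => eventually (fun n => Q n (Tseq T v f g n))).
Proof.
  apply meas_union; intros N; apply meas_all; intros n.
  apply (meas_finite_dependence n); intros v w H.
  unfold Tseq; rewrite (hist_ext f g n v w H); tauto.
Qed.

Section ProbabilityMeasure.

Variable mu : (Seq -> Prop) -> R.
Hypothesis Hmu : is_prob_measure mu.

Lemma mu_ge0 (A : Seq -> Prop) : measurable A -> 0 <= mu A.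
Proof. apply (proj1 Hmu). Qed.

(* Countable additivity on the constant empty family forces mu(empty) = 0:
   consecutive partial sums n*c differ by c and both converge to c. *)
Lemma mu_empty : mu (fun _ => False) = 0.
Proof.
  destruct Hmu as [_ [_ Hadd]].
  assert (Hs := Hadd (fun _ _ => False) (fun _ => meas_empty) (fun m n _ v a _ => a)).
  cbv beta in Hs.
  rewrite (mu_ext mu (fun v => exists _ : nat, False) (fun _ => False)) in Hs
    by (intros v; split; [intros [_ []] | tauto]).
  set (c := mu (fun _ => False)) in *.
  destruct (Req_dec c 0) as [E|E]; auto; exfalso.
  assert (Hc : Rabs c > 0) by (apply Rabs_pos_lt; auto).
  destruct (Hs (Rabs c / 2)) as [N HN]; [lra |].
  pose proof (HN N ltac:(lia)) as H1. pose proof (HN (S N) ltac:(lia)) as H2.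
  set (s := sum_f_R0 (fun _ => c)) in *.
  assert (Hstep : R_dist (s (S N)) (s N) = Rabs c).
  { unfold s, R_dist; rewrite tech5; f_equal; ring. }
  pose proof (R_dist_tri (s (S N)) (s N) c) as Htri.
  rewrite (R_dist_sym c), Hstep in Htri. lra.
Qed.

Lemma mu_add (A B : Seq -> Prop) :
  measurable A -> measurable B -> (forall v, A v -> B v -> False) ->
  mu (fun v => A v \/ B v) = mu A + mu B.
Proof.
  intros HA HB Hd. pose proof mu_empty as He. destruct Hmu as [_ [_ Hadd]].
  set (F n := match n with O => A | 1%nat => B | _ => fun _ => False end).
  assert (MF : forall n, measurable (F n))
    by (intros [|[|n]]; simpl; auto using meas_empty).
  assert (DF : forall m n, m <> n -> forall v, F m v -> F n v -> False).
  { intros [|[|m]] [|[|n]] Hmn v; simpl; try tauto; try congruence; eauto. }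
  assert (Hs := Hadd F MF DF).
  rewrite (mu_ext mu (fun v => exists n, F n v) (fun v => A v \/ B v)) in Hs.
  2:{ intros v; split.
      - intros [[|[|n]] H]; simpl in H; tauto.
      - intros [H|H]; [exists O | exists 1%nat]; auto. }
  apply (uniqueness_sum _ _ _ Hs). intros eps Heps. exists 1%nat. intros n Hn.
  assert (Hpart : forall k, sum_f_R0 (fun n => mu (F n)) (S k) = mu A + mu B).
  { induction k as [|k IH]; [reflexivity |].
    rewrite tech5, IH; simpl; rewrite He; ring. }
  destruct n as [|n]; [lia |].
  rewrite Hpart; unfold R_dist; rewrite Rminus_diag, Rabs_R0; lra.
Qed.

Lemma mu_compl (A : Seq -> Prop) : measurable A -> mu (fun v => ~ A v) = 1 - mu A.
Proof.
  intros HA.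
  assert (E := mu_add A (fun v => ~ A v) HA (meas_compl _ HA) (fun v a b => b a)).
  cbv beta in E.
  rewrite (mu_ext mu (fun v => A v \/ ~ A v) (fun _ => True)) in E
    by (intros v; split; [auto | intros _; apply classic]).
  destruct Hmu as [_ [H1 _]]; lra.
Qed.

Lemma mu_mono (A B : Seq -> Prop) :
  measurable A -> measurable B -> (forall v, A v -> B v) -> mu A <= mu B.
Proof.
  intros HA HB H.
  assert (MD : measurable (fun v => B v /\ ~ A v)) by (apply meas_and, meas_compl; auto).
  assert (E := mu_add A (fun v => B v /\ ~ A v) HA MD (fun v a b => proj2 b a)).
  cbv beta in E.
  rewrite (mu_ext mu (fun v => A v \/ (B v /\ ~ A v)) B) in E.
  - pose proof (mu_ge0 _ MD); lra.
  - intros v; split; [intros [Ha|[Hb _]]; auto | intros Hb; destruct (classic (A v)); auto].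
Qed.

(* A countable union of null events is null; it is the disjoint union of the
   events N_k minus the earlier ones. *)
Lemma mu_null_union (N : nat -> Seq -> Prop) :
  (forall k, measurable (N k)) -> (forall k, mu (N k) = 0) ->
  mu (fun v => exists k, N k v) = 0.
Proof.
  intros MN EN.
  set (D k v := N k v /\ forall j, (j < k)%nat -> ~ N j v).
  assert (MD : forall k, measurable (D k)).
  { intros k; apply meas_and; auto; apply meas_all; intros j.
    destruct (classic (j < k)%nat).
    - apply meas_ext with (fun v => ~ N j v); [apply meas_compl; auto | intros v; tauto].
    - apply meas_ext with (fun _ => True); [apply meas_full | intros v; tauto]. }
  assert (ED : forall k, mu (D k) = 0).
  { intros k; apply Rle_antisym; [| apply mu_ge0; auto].
    rewrite <- (EN k); apply mu_mono; auto; intros v [H _]; auto. }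
  assert (DD : forall m n, m <> n -> forall v, D m v -> D n v -> False).
  { intros m n Hmn v [Hm Hm'] [Hn Hn'].
    destruct (Nat.lt_total m n) as [H|[H|H]]; [apply (Hn' m) | | apply (Hm' n)]; auto. }
  assert (Hs := proj2 (proj2 Hmu) D MD DD).
  rewrite (mu_ext mu (fun v => exists n, D n v) (fun v => exists k, N k v)) in Hs.
  - apply (uniqueness_sum _ _ _ Hs). intros eps Heps. exists O. intros n _.
    replace (fun k => mu (D k)) with (fun _ : nat => 0) by (extensionality k; auto).
    rewrite sum_cte; unfold R_dist.
    replace (0 * INR (S n) - 0) with 0 by ring. rewrite Rabs_R0; lra.
  - intros v; split; [intros [k [Hk _]]; eauto |].
    intros [k Hk]; revert Hk.
    induction k as [k IH] using (well_founded_induction Wf_nat.lt_wf); intros Hk.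
    destruct (classic (exists j, (j < k)%nat /\ N j v)) as [[j [Hj1 Hj2]]|Hno].
    + apply (IH j); auto.
    + exists k; split; auto; intros j Hj HN; apply Hno; eauto.
Qed.

Lemma mu_full_inter (S : nat -> Seq -> Prop) :
  (forall k, measurable (S k)) -> (forall k, mu (S k) = 1) ->
  mu (fun v => forall k, S k v) = 1.
Proof.
  intros MS ES.
  assert (MC : forall k, measurable (fun v => ~ S k v)) by (intros k; apply meas_compl; auto).
  assert (Hnull : mu (fun v => exists k, ~ S k v) = 0).
  { apply mu_null_union; auto. intros k; rewrite mu_compl, ES; auto; ring. }
  rewrite (mu_ext mu (fun v => forall k, S k v) (fun v => ~ exists k, ~ S k v)).
  - rewrite mu_compl, Hnull; [ring | apply meas_union; auto].
  - intros v; split.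
    + intros H [k Hk]; auto.
    + intros H k; apply NNPP; intros Hk; apply H; eauto.
Qed.

End ProbabilityMeasure.

(* If
   every mu1-charged, mu2-null event A meets the "detection" event S' with
   positive mu1-probability, then every measurable S containing S' is
   mu1-full: the mu2-null part C1 \ S of C1 cannot meet S', so it is mu1-null. *)
Lemma full_by_detection (mu1 mu2 : (Seq -> Prop) -> R) (C1 C2 S S' : Seq -> Prop) :
  is_prob_measure mu1 -> is_prob_measure mu2 ->
  measurable C1 -> measurable C2 -> measurable S ->
  (forall v, C1 v -> C2 v -> False) -> mu1 C1 = 1 -> mu2 C2 = 1 ->
  (forall v, S' v -> S v) ->
  (forall A, measurable A -> mu1 A > 0 -> mu2 A = 0 ->
     mu1 (fun v => A v /\ S' v) > 0) ->
  mu1 S = 1.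
Proof.
  intros P1 P2 M1 M2 MS Hdisj E1 E2 HS Hdetect.
  set (A v := C1 v /\ ~ S v).
  assert (MA : measurable A) by (apply meas_and, meas_compl; auto).
  assert (MCS : measurable (fun v => C1 v /\ S v)) by (apply meas_and; auto).
  assert (E2A : mu2 A = 0).
  { apply Rle_antisym; [| apply mu_ge0; auto].
    assert (mu2 A <= mu2 (fun v => ~ C2 v)).
    { apply mu_mono; auto; [apply meas_compl; auto |].
      intros v [Hc _] Hc2; eauto. }
    rewrite mu_compl in H by auto; lra. }
  assert (E1A : mu1 A = 0).
  { destruct (Rle_lt_or_eq_dec 0 (mu1 A) (mu_ge0 mu1 P1 A MA)) as [Hpos|]; auto.
    exfalso. pose proof (Hdetect A MA Hpos E2A) as Hp.
    rewrite (mu_ext mu1 (fun v => A v /\ S' v) (fun _ => False)) in Hp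
      by (intros v; unfold A; split; [intros [[_ Hn] Hs']; auto | tauto]).
    rewrite mu_empty in Hp by exact P1. lra. }
  assert (Hsplit : mu1 C1 = mu1 (fun v => C1 v /\ S v) + mu1 A).
  { rewrite <- mu_add by (unfold A; auto; intros v [_ H1] [_ H2]; auto).
    apply mu_ext; intros v; unfold A; split.
    - intros Hc; destruct (classic (S v)); auto.
    - intros [[Hc _]|[Hc _]]; auto. }
  assert (mu1 (fun v => C1 v /\ S v) <= mu1 S)
    by (apply mu_mono; auto; intros v [_ H]; auto).
  assert (mu1 S <= mu1 (fun _ => True))
    by (apply mu_mono; auto using meas_full).
  destruct P1 as [_ [Htot _]]. lra.
Qed.

(* Tolerances 1/(k+3) used to express convergence by countably many events. *)
Definition tol (k : nat) : R := / (INR k + 3).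

Lemma tol_bounds (k : nat) : 0 < tol k < 1/2.
Proof.
  unfold tol; pose proof (pos_INR k). split; [apply Rinv_0_lt_compat; lra |].
  apply Rle_lt_trans with (/ 3); [apply Rinv_le_contravar; lra |].
  replace (1/2) with (/2) by field. apply Rinv_lt_contravar; lra.
Qed.

Lemma tol_small (eps : R) : 0 < eps -> exists k, tol k < eps.
Proof.
  intros H. destruct (archimed_cor1 eps H) as [N [HN HN0]]. exists N.
  apply Rle_lt_trans with (/ INR N); auto.
  unfold tol; apply Rinv_le_contravar; [apply lt_0_INR; auto | lra].
Qed.

Lemma eventually_above_of_cv (u : nat -> R) (l e : R) :
  Un_cv u l -> e < l -> eventually (fun n => e <= u n).
Proof.
  intros Hl He. destruct (Hl (l - e)) as [N HN]; [lra |].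
  exists N; intros n Hn; specialize (HN n Hn).
  unfold R_dist in HN; apply Rabs_def2 in HN; lra.
Qed.

Lemma eventually_below_of_cv (u : nat -> R) (l e : R) :
  Un_cv u l -> l < e -> eventually (fun n => u n <= e).
Proof.
  intros Hl He. destruct (Hl (e - l)) as [N HN]; [lra |].
  exists N; intros n Hn; specialize (HN n Hn).
  unfold R_dist in HN; apply Rabs_def2 in HN; lra.
Qed.

Lemma cv_from_below (u : nat -> R) (c : R) :
  (forall n, u n <= c) ->
  (Un_cv u c <-> forall k, eventually (fun n => c - tol k <= u n)).
Proof.
  intros Hub; split.
  - intros Hcv k; apply (eventually_above_of_cv u c); auto.
    pose proof (tol_bounds k); lra.
  - intros Hev eps Heps. destruct (tol_small eps Heps) as [k Hk].
    destruct (Hev k) as [N HN]. exists N; intros n Hn.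
    specialize (HN n Hn); specialize (Hub n).
    unfold R_dist; apply Rabs_def1; lra.
Qed.

Lemma cv_from_above (u : nat -> R) (c : R) :
  (forall n, c <= u n) ->
  (Un_cv u c <-> forall k, eventually (fun n => u n <= c + tol k)).
Proof.
  intros Hlb; split.
  - intros Hcv k; apply (eventually_below_of_cv u c); auto.
    pose proof (tol_bounds k); lra.
  - intros Hev eps Heps. destruct (tol_small eps Heps) as [k Hk].
    destruct (Hev k) as [N HN]. exists N; intros n Hn.
    specialize (HN n Hn); specialize (Hlb n).
    unfold R_dist; apply Rabs_def1; lra.
Qed.

Definition Above (T : Test) (f g : Strategy) (e : R) : Seq -> Prop :=
  fun v => eventually (fun n => e <= Tseq T v f g n).

Definition Below (T : Test) (f g : Strategy) (e : R) : Seq -> Prop :=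
  fun v => eventually (fun n => Tseq T v f g n <= e).

(* Under f, a reasonable test eventually stays above every e in (1/2, 1):
   on f-charged g-null events the likelihood condition of reasonableness
   holds trivially, so L_e (which is contained in Above e) is detected. *)
Lemma above_full (f g : Strategy) (muf mug : (Seq -> Prop) -> R) (T : Test) (e : R) :
  induces f f g muf -> induces g f g mug ->
  mutually_singular f g muf mug -> reasonable T ->
  1/2 < e < 1 -> muf (Above T f g e) = 1.
Proof.
  intros If Ig [_ [Cf [Cg [Hd [MCf [MCg [E1 E2]]]]]]] HR He.
  apply (full_by_detection muf mug _ _ _ (Lset T f g e) (proj1 If) (proj1 Ig)
           MCf MCg (meas_eventually_test T f g (fun _ x => e <= x))
           (fun v a b => Hd (path v f g) a b) E1 E2).
  - intros v [l [Hl Hle]]. exact (eventually_above_of_cv _ l e Hl Hle).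
  - intros A MA Hpos Hnull. apply (proj2 (HR f g muf mug If Ig A MA) e He Hpos).
    rewrite Hnull. apply Rmult_lt_0_compat; [apply Rdiv_lt_0_compat |]; lra.
Qed.

Lemma below_full (f g : Strategy) (muf mug : (Seq -> Prop) -> R) (T : Test) (e : R) :
  induces f f g muf -> induces g f g mug ->
  mutually_singular f g muf mug -> reasonable T ->
  0 < e < 1/2 -> mug (Below T f g e) = 1.
Proof.
  intros If Ig [_ [Cf [Cg [Hd [MCf [MCg [E1 E2]]]]]]] HR He.
  apply (full_by_detection mug muf _ _ _ (Defs.Rset T f g e) (proj1 Ig) (proj1 If)
           MCg MCf (meas_eventually_test T f g (fun _ x => x <= e))
           (fun v a b => Hd (path v f g) b a) E2 E1).
  - intros v [l [Hl Hle]]. exact (eventually_below_of_cv _ l e Hl Hle).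
  - intros A MA Hpos Hnull. apply (proj1 (HR f g muf mug If Ig A MA) e He Hpos).
    rewrite Hnull. apply Rmult_lt_0_compat; [apply Rdiv_lt_0_compat |]; lra.
Qed.

Theorem mainTheorem12 (f g : Strategy) (muf mug : (Seq -> Prop) -> R) (T : Test) :
  f <> g ->
  induces f f g muf -> induces g f g mug ->
  mutually_singular f g muf mug ->
  is_test T -> reasonable T ->
  muf (A_f T f g) = 1 /\ mug (A_g T f g) = 1.
Proof.
  intros _ If Ig Hsing HT HR. split.
  -
    rewrite (mu_ext muf (A_f T f g) (fun v => forall k, Above T f g (1 - tol k) v))
      by (intros v; apply cv_from_below; intros n; apply HT).
    apply mu_full_inter; [exact (proj1 If) | |].
    + intros k; exact (meas_eventually_test T f g (fun _ x => 1 - tol k <= x)).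
    + intros k; apply (above_full f g muf mug); auto. pose proof (tol_bounds k); lra.
  -
    rewrite (mu_ext mug (A_g T f g) (fun v => forall k, Below T f g (0 + tol k) v))
      by (intros v; apply cv_from_above; intros n; apply HT).
    apply mu_full_inter; [exact (proj1 Ig) | |].
    + intros k; exact (meas_eventually_test T f g (fun _ x => x <= 0 + tol k)).
    + intros k; apply (below_full f g muf mug); auto. pose proof (tol_bounds k); lra.
Qed.
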